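(* For every prime $p>2$ and every integer $a$ with $|a|\le 2\sqrt p$, there is a prime $\ell\neq p$ dividing $(p+1+a)(p+1-a)$. Moreover this fails for $p=2$: there is an integer $a$ with $|a|\le 2\sqrt 2$ such that $(3+a)(3-a)$ is a power of $2$.
   Context: This is the case $n=1$ (rational $p$-th Fourier coefficients) of the statement: there is $C_1$ such that for every prime $p>C_1$ and every $p$-th Fourier coefficient of degree $1$ there is a prime not over $p$ dividing $(a_p+p+1)(a_p-p-1)$; the paper states that the best such bound is $C_1=2$. *)

From mathcomp Require Import all_boot all_order all_algebra all_field.

(* Put n = p + 1 + a and m = p + 1 - a.  The Hasse-type bound |a| <= 2 sqrt p
   gives |a| <= p + 1, so n and m are natural numbers with n + m = 2(p + 1).
   If n m had no prime factor other than p, both n and m would be powers of p;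
   but modulo p a sum of two powers of p is 0, 1 or 2 according to how many
   exponents vanish, while 2(p + 1) is 2 mod p, so both exponents would vanish
   and n + m = 2, which is absurd. *)

From mathcomp Require Import all_boot all_order all_algebra all_field.
From mathcomp Require Import zify.
Import GRing.Theory Num.Theory.

Set Implicit Arguments.
Unset Strict Implicit.

Lemma exists_prime_dvd_neq_of_not_pnat (p z : nat) :
  ~~ p.-nat z -> exists l, [/\ prime l, l != p & l %| z].
Proof.
have [-> _ | z_gt0] := posnP z.
  by case: (p =P 2) => [->|/eqP p_neq2]; [exists 3 | exists 2]; rewrite dvdn0 eq_sym.
rewrite /pnat z_gt0 => /allPn[l]; rewrite mem_primes z_gt0 => /andP[l_pr l_dvd].
by exists l.
Qed.

Lemma expn_modn_self (p i : nat) : 1 < p -> p ^ i %% p = (i == 0).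
Proof. by case: i => [|i] p_gt1; [rewrite modn_small | rewrite expnS modnMr]. Qed.

Lemma expnD_neq_double_succ (p i j : nat) : 2 < p -> p ^ i + p ^ j != (p + 1).*2.
Proof.
move=> p_gt2; apply/negP => /eqP eq_pow.
have : (p ^ i + p ^ j) %% p = 2.
  by rewrite eq_pow -mul2n mulnDr muln1 modnMDl (modn_small p_gt2).
rewrite -modnDm !expn_modn_self 1?ltnW // modn_small; last first.
  exact: leq_ltn_trans (leq_add (leq_b1 _) (leq_b1 _)) p_gt2.
case: i eq_pow => [|i]; case: j => [|j] //=.
by rewrite !expn0; lia.
Qed.

Lemma not_pnat_mul_of_addn (p n m : nat) :
  2 < p -> n + m = (p + 1).*2 -> ~~ p.-nat (n * m).
Proof.
move=> p_gt2 sum_nm; rewrite pnatM; apply/andP => -[/p_natP[i n_eq] /p_natP[j m_eq]].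
by move: (expnD_neq_double_succ i j p_gt2); rewrite -n_eq -m_eq sum_nm eqxx.
Qed.

Local Open Scope ring_scope.

Lemma normz_le_succ_of_normC_le_2sqrtC (n : nat) (a : int) :
  `|(a%:~R : algC)| <= 2 * sqrtC n%:R -> `|a| <= n%:Z + 1.
Proof.
rewrite -intr_norm => le_a.
have sqr_le : `|a| ^+ 2 <= (4 * n)%:Z.
  rewrite -(ler_int algC) rmorphXn /= -pmulrn natrM.
  have -> : 4%:R = (2 : algC) ^+ 2 by rewrite -natrX.
  rewrite -(sqrtCK n%:R) -exprMn ler_pXn2r // nnegrE ?mulr_ge0 ?sqrtC_ge0 ?ler0n ?ler0z //.
nia.
Qed.

Theorem lemma2p5 :
  (forall (p : nat) (a : int), prime p -> (2 < p)%N ->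
     `|(a%:~R : algC)| <= 2 * sqrtC (p%:R) ->
     exists l : nat, [/\ prime l, l != p &
       (l%:Z %| (p%:Z + 1 + a) * (p%:Z + 1 - a))%Z])
  /\
  (exists a : int, `|(a%:~R : algC)| <= 2 * sqrtC (2%:R) /\
     exists k : nat, (3 + a) * (3 - a) = (2 ^+ k : int)).
Proof.
split.
  move=> p a _ p_gt2 /normz_le_succ_of_normC_le_2sqrtC le_a.
  have sum_abs : (absz (p%:Z + 1 + a)%R + absz (p%:Z + 1 - a)%R)%N = (p + 1).*2 by lia.
  have [l [l_pr l_neq_p l_dvd]] :=
    exists_prime_dvd_neq_of_not_pnat (not_pnat_mul_of_addn p_gt2 sum_abs).
  by exists l; rewrite dvdzE abszM.
exists 1; split; last by exists 3%N.
rewrite normr1 -[X in X <= _]mul1r ler_pM ?ler0n ?ler1n //.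
by rewrite -{1}sqrtC1 ler_sqrtC ?nnegrE ?ler0n // ler1n.
Qed.
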